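(* Let $k\ge 2$ and let $H$ be a hypergraph on vertex set $V$ with $R(H)=\{1,k\}$ whose $1$-edges are exactly all singletons $\{v\}$, $v\in V$, and let $H^k$ denote the $k$-uniform hypergraph of $k$-edges of $H$. Then \[\pi(H)=\begin{cases}1+\pi(H^k) & \text{if } \pi(H^k)\ge 1-\frac1k,\\[2pt] 1+\left(\frac{1}{k(1-\pi(H^k))}\right)^{1/(k-1)}\left(1-\frac1k\right) & \text{otherwise.}\end{cases}\]
   Context: A hypergraph $H=(V,E)$ has finite vertex set $V$ and edge set $E\subseteq 2^V$; $R(H)=\{|F|:F\in E\}$. $H_1\subseteq H_2$ means there is an injective $f\colon V(H_1)\to V(H_2)$ with $f(F)\in E(H_2)$ for all $F\in E(H_1)$. For $G$ on $n$ vertices, $h_n(G)=\sum_{F\in E(G)}1/\binom{n}{|F|}$; $\pi_n(H)=\max\{h_n(G): G\text{ on } n \text{ vertices}, R(G)\subseteq R(H), H\not\subseteq G\}$ and $\pi(H)=\lim_n\pi_n(H)$. For a $k$-uniform hypergraph this $\pi$ is the usual Turán density $\lim_n \mathrm{ex}(n,H^k)/\binom nk$. *)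

From HB Require Import structures.
From mathcomp Require Import all_boot all_order all_algebra.
From mathcomp Require Import all_classical all_reals all_analysis.
Set Implicit Arguments. Unset Strict Implicit. Unset Printing Implicit Defensive.
Import Order.TTheory GRing.Theory Num.Theory.
Local Open Scope ring_scope.

Definition in_sizes (V : finType) (E : {set {set V}}) (m : nat) : bool :=
  [exists F in E, #|F| == m].

Definition sizes_sub (V W : finType) (EG : {set {set W}}) (EH : {set {set V}}) : bool :=
  [forall F in EG, in_sizes EH #|F|].

Definition hg_sub (V W : finType) (EH : {set {set V}}) (EG : {set {set W}}) : bool :=
  [exists f : {ffun V -> W}, injectiveb f && [forall F in EH, (f @: F) \in EG]].

Definition hn (R : realType) (n : nat) (G : {set {set 'I_n}}) : R :=
  \sum_(F in G) ('C(n, #|F|)%:R)^-1.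

(* pi_n(H): max of h_n(G) over G on n vertices, R(G) \subseteq R(H), H not \subseteq G.
   (The max is over a finite nonempty family -- the empty graph qualifies when H has
   an edge -- of nonnegative reals, so taking max with 0 is harmless.) *)
Definition pin (R : realType) (V : finType) (E : {set {set V}}) (n : nat) : R :=
  \big[Num.max/0]_(G : {set {set 'I_n}} | sizes_sub G E && ~~ hg_sub E G) hn R G.

Definition kedges (V : finType) (E : {set {set V}}) (k : nat) : {set {set V}} :=
  [set F in E | #|F| == k].

Definition pi_formula (R : realType) (k : nat) (a : R) : R :=
  if 1 - (k%:R)^-1 <= a then 1 + a
  else 1 + ((k%:R * (1 - a))^-1) `^ ((k%:R - 1)^-1) * (1 - (k%:R)^-1).

From HB Require Import structures.
From mathcomp Require Import all_boot all_order all_algebra.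
From mathcomp Require Import all_classical all_reals all_analysis.
From mathcomp Require Import ring lra zify.
Import Order.TTheory GRing.Theory Num.Theory.
Import numFieldNormedType.Exports.
Local Open Scope ring_scope.
Set Implicit Arguments. Unset Strict Implicit. Unset Printing Implicit Defensive.

(* Let a be the Turan density of H^k. In an H-free G on n vertices, let S be
   the set of the s vertices whose singletons are edges of G. The k-edges of G
   inside S form an H^k-free graph on S (with the singletons of S they would
   otherwise contain H), so h_n(G) <= 1 + s/n - C(s,k)/C(n,k) (1 - pi_s(H^k)),
   and equality is attained by the singletons of S, all k-sets not inside S and
   an extremal H^k-free graph on S. As pi_s(H^k) decreases to a, letting n grow
   with s/n -> y turns this bound into max_{y in [0,1]} 1 + y - (1 - a) y^k,
   maximised at y = 1 when k (1 - a) <= 1 and at y = (k (1 - a))^(-1/(k-1))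
   otherwise. *)

Lemma hg_subP (V W : finType) (E : {set {set V}}) (G : {set {set W}}) :
  reflect (exists2 f : V -> W, injective f & forall F, F \in E -> f @: F \in G)
          (hg_sub E G).
Proof.
apply: (iffP existsP) => [[f /andP[/injectiveP fi /forallP fE]]|[f fi fE]].
  by exists f => // F FE; exact: implyP (fE F) FE.
exists [ffun v => f v]; apply/andP; split.
  by apply/injectiveP => x y; rewrite !ffunE => /fi.
apply/forallP => F; apply/implyP => /fE.
by congr (_ \in G); apply: eq_imset => v; rewrite ffunE.
Qed.

Lemma hg_sub_imset (V W T : finType) (E : {set {set V}}) (G' : {set {set W}})
    (G : {set {set T}}) (e : W -> T) :
  injective e -> (forall F, F \in G' -> e @: F \in G) -> hg_sub E G' -> hg_sub E G.
Proof.
move=> ei eG /hg_subP[f fi fE]; apply/hg_subP; exists (e \o f).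
  exact: inj_comp.
by move=> F /fE /eG; rewrite imset_comp.
Qed.

Lemma hg_sub_factor (V W T : finType) (E : {set {set V}}) (G : {set {set W}})
    (e : W -> T) (f : V -> T) :
  injective e -> injective f -> (forall v, f v \in codom e) ->
  (forall F, F \in E -> f @: F \in [set e @: F' | F' : {set W} in G]) -> hg_sub E G.
Proof.
move=> ei fi fe fE; pose g v := iinv (fe v).
have egf v : e (g v) = f v by exact: f_iinv.
apply/hg_subP; exists g => [x y /(congr1 e)|F /fE/imsetP[F' F'G]].
  by rewrite !egf => /fi.
suff -> : f @: F = e @: (g @: F) by move/(imset_inj ei) ->.
by rewrite -imset_comp; apply: eq_imset => v /=; rewrite egf.
Qed.

Lemma card_preimset_imset (W T : finType) (e : W -> T) (G : {set {set T}}) :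
  injective e ->
  #|[set F : {set W} | e @: F \in G]| = #|[set F in G | F \subset e @: [set: W]]|.
Proof.
move=> ei; rewrite -(card_imset _ (imset_inj ei)); apply: eq_card => F.
rewrite inE; apply/imsetP/andP => [[F']|[FG Fe]].
  by rewrite inE => ? ->; split => //; exact/imsetS/finset.subsetT.
have eF : e @: (e @^-1: F) = F.
  apply/setP => x; apply/imsetP/idP => [[y]|xF]; first by rewrite inE => ? ->.
  have /imsetP[y _ exy] := fintype.subsetP Fe x xF.
  by exists y; rewrite // inE -exy.
by exists (e @^-1: F); rewrite // inE eF.
Qed.

Lemma sum_card_notin (T : finType) k (G : {set {set T}}) :
  {in G, forall F : {set T}, #|F| = k} ->
  (\sum_(i : T) #|[set F in G | i \notin F]| = #|G| * (#|T| - k))%N.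
Proof.
move=> Gk; transitivity (\sum_(F in G) \sum_(i : T) (i \notin F : nat))%N.
  rewrite exchange_big; apply: eq_bigr => i _.
  rewrite -sum1_card big_mkcond [RHS]big_mkcond /=.
  by apply: eq_bigr => F _; rewrite !inE; case: (F \in G); case: (i \in F).
rewrite -sum_nat_const; apply: eq_bigr => F /Gk <-.
rewrite -[X in (X - _)%N](cardsC F) addKn -sum1_card [RHS]big_mkcond.
by apply: eq_bigr => i _; rewrite !inE.
Qed.

Lemma card_uniform_le_bin (T : finType) k (G : {set {set T}}) :
  {in G, forall F : {set T}, #|F| = k} -> (#|G| <= 'C(#|T|, k))%N.
Proof.
move=> Gk; rewrite -card_draws; apply: subset_leq_card.
by apply/fintype.subsetP => F /Gk Fk; rewrite inE Fk.
Qed.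

Lemma bin_ratioE (R : realFieldType) n s k :
  'C(s, k)%:R / 'C(n, k)%:R = \prod_(i < k) ((s - i)%N%:R / (n - i)%N%:R : R).
Proof.
rewrite prodf_div -!natr_prod -!ffact_prod -!bin_ffact !natrM.
have k0 : (k`!)%:R != 0 :> R by rewrite pnatr_eq0 -lt0n fact_gt0.
by rewrite invfM mulrACA mulfV // mulr1.
Qed.

Lemma bin_ratio_le_expn (R : realFieldType) n s k : (s <= n)%N -> (k <= n)%N ->
  'C(s, k)%:R / 'C(n, k)%:R <= (s%:R / n%:R) ^+ k :> R.
Proof.
move=> sn kn; rewrite bin_ratioE -[k in _ ^+ k](card_ord k) -prodr_const.
apply: ler_prod => i _; rewrite divr_ge0 //=.
have ni : (0 : R) < (n - i)%N%:R by rewrite ltr0n subn_gt0 (leq_trans _ kn).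
have n0 : (0 : R) < n%:R by rewrite ltr0n (leq_ltn_trans _ (leq_trans (ltn_ord i) kn)).
rewrite ler_pdivrMr // mulrAC ler_pdivlMr // -!natrM ler_nat.
by rewrite mulnBr mulnBl mulnC leq_sub2l // mulnC leq_mul2l sn orbT.
Qed.

Lemma expn_le_bin_ratio (R : realFieldType) n s k : (k <= s <= n)%N ->
  ((s - k)%N%:R / n%:R) ^+ k <= 'C(s, k)%:R / 'C(n, k)%:R :> R.
Proof.
case/andP=> ks sn; rewrite bin_ratioE -[k in _ ^+ k](card_ord k) -prodr_const.
apply: ler_prod => i _; rewrite divr_ge0 //=.
have kn := leq_trans ks sn.
have ni : (0 : R) < (n - i)%N%:R by rewrite ltr0n subn_gt0 (leq_trans _ kn).
have n0 : (0 : R) < n%:R by rewrite ltr0n (leq_ltn_trans _ (leq_trans (ltn_ord i) kn)).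
rewrite ler_pdivrMr // mulrAC ler_pdivlMr // -!natrM ler_nat.
by apply: leq_mul; [apply/leq_sub2l/ltnW | apply: leq_subr].
Qed.

Lemma card_ksets_not_subset (T : finType) (S : {set T}) k :
  (#|[set F : {set T} | (#|F| == k) && ~~ (F \subset S)]| + 'C(#|S|, k) = 'C(#|T|, k))%N.
Proof.
rewrite -cards_draws -card_draws addnC.
rewrite -(cardsID [set F : {set T} | F \subset S] [set F : {set T} | #|F| == k]).
by congr (_ + _); apply: eq_card => F; rewrite !inE // andbC.
Qed.

Definition admissible (V T : finType) (E : {set {set V}}) (G : {set {set T}}) :=
  sizes_sub G E && ~~ hg_sub E G.

Definition singleton_vertices (T : finType) (G : {set {set T}}) := [set v | [set v] \in G].

Section Density.
Variables (R : realType) (V : finType) (E : {set {set V}}) (n : nat).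

Lemma hn_ge0 (G : {set {set 'I_n}}) : 0 <= hn R G.
Proof. by apply: sumr_ge0 => F _; rewrite invr_ge0 ler0n. Qed.

Lemma hn_uniform k (G : {set {set 'I_n}}) : {in G, forall F : {set 'I_n}, #|F| = k} ->
  hn R G = #|G|%:R / 'C(n, k)%:R.
Proof.
move=> Gk; rewrite /hn (eq_bigr (fun=> 'C(n, k)%:R^-1)) => [|F /Gk -> //].
by rewrite sumr_const mulr_natl.
Qed.

Lemma hn_split k (G : {set {set 'I_n}}) : (k != 1)%N ->
    {in G, forall F : {set 'I_n}, #|F| = 1%N \/ #|F| = k} ->
  hn R G = #|singleton_vertices G|%:R / n%:R + #|kedges G k|%:R / 'C(n, k)%:R.
Proof.
move=> k1 Gsz; rewrite /hn (big_setID [set F : {set 'I_n} | #|F| == k]) /= addrC.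
have -> : G :&: [set F : {set 'I_n} | #|F| == k] = kedges G k.
  by apply/setP => F; rewrite !inE.
have -> : G :\: [set F : {set 'I_n} | #|F| == k] = [set [set v] | v in singleton_vertices G].
  apply/setP => F; rewrite !inE; apply/andP/imsetP => [[Fk FG]|[v]].
    have [/eqP/cards1P[v Fv]|Fk'] := Gsz F FG; last by rewrite Fk' eqxx in Fk.
    by exists v; rewrite // inE -Fv.
  by rewrite inE => vG ->; rewrite cards1 eq_sym k1.
rewrite (eq_bigr (fun=> n%:R^-1)) => [|F /imsetP[v _ ->]]; last by rewrite cards1 bin1.
rewrite [X in _ + X](eq_bigr (fun=> 'C(n, k)%:R^-1)) => [|F]; last first.
  by rewrite inE => /andP[_ /eqP ->].
by rewrite !sumr_const card_imset ?mulr_natl //; exact: set1_inj.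
Qed.

Lemma pin_ge0 : 0 <= pin R E n.
Proof. exact: bigmax_ge_id. Qed.

Lemma hn_le_pin (G : {set {set 'I_n}}) : admissible E G -> hn R G <= pin R E n.
Proof. exact: le_bigmax_cond. Qed.

Lemma pin_le (b : R) : 0 <= b ->
  (forall G : {set {set 'I_n}}, admissible E G -> hn R G <= b) -> pin R E n <= b.
Proof. exact: bigmax_le. Qed.

Lemma pin_attained (G0 : {set {set 'I_n}}) : admissible E G0 ->
  exists2 G : {set {set 'I_n}}, admissible E G & hn R G = pin R E n.
Proof.
move=> G0E; have [G GE hG] := Order.TotalTheory.eq_bigmax _ _ _ G0E (fun G _ => hn_ge0 G).
by exists G => //; exact: esym hG.
Qed.

End Density.

Lemma expn_tangent_le (R : realFieldType) (y z : R) m : 0 <= y -> 0 <= z ->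
  z ^+ m.+1 + m.+1%:R * z ^+ m * (y - z) <= y ^+ m.+1.
Proof.
move=> y0 z0; elim: m => [|m IH]; first by rewrite !expr1 expr0 mulr1 mul1r; lra.
have zm0 : 0 <= z ^+ m by rewrite exprn_ge0.
have yIH := ler_wpM2l y0 IH.
have sq0 : 0 <= m.+1%:R * z ^+ m * ((y - z) * (y - z)).
  by apply: mulr_ge0; [exact: mulr_ge0 | rewrite -expr2; exact: sqr_ge0].
rewrite exprS [y ^+ _]exprS; apply: le_trans yIH.
rewrite !exprS -[m.+2%:R]natr1 -[m.+1%:R]natr1 in sq0 *.
have m0 : 0 <= m%:R :> R by rewrite ler0n.
nra.
Qed.

Section Profile.
Variables (R : realType) (k : nat) (a : R).
Hypotheses (k_gt1 : (1 < k)%N) (a_ge0 : 0 <= a) (a_le1 : a <= 1).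

Definition profile (y : R) : R := 1 + y - (1 - a) * y ^+ k.

Definition profile_argmax : R :=
  if 1 - k%:R^-1 <= a then 1 else (k%:R * (1 - a))^-1 `^ (k%:R - 1)^-1.

Lemma profile_le_tangent y z : 0 <= y -> 0 <= z ->
  profile y <= profile z + (y - z) * (1 - (1 - a) * k%:R * z ^+ k.-1).
Proof.
move=> y0 z0; have := expn_tangent_le k.-1 y0 z0; rewrite prednK ?(ltnW k_gt1) //.
have a1 : 0 <= 1 - a by rewrite subr_ge0.
move=> /(ler_wpM2l a1); rewrite /profile; nra.
Qed.

Let kR_gt0 : 0 < k%:R :> R. Proof. by rewrite ltr0n (ltnW k_gt1). Qed.

Lemma profile_argmax_small : ~~ (1 - k%:R^-1 <= a) ->
  [/\ 0 <= profile_argmax, profile_argmax <= 1 &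
      (1 - a) * k%:R * profile_argmax ^+ k.-1 = 1].
Proof.
move=> small; rewrite /profile_argmax (negPf small); rewrite -ltNge in small.
have ka : 1 < k%:R * (1 - a) by rewrite -ltr_pdivrMl // mulr1; lra.
have c0 : 0 < (k%:R * (1 - a))^-1 by rewrite invr_gt0 (lt_trans ltr01).
set z := _ `^ _.
have k1 : (0 < k.-1)%N by lia.
have km1 : k%:R - 1 = k.-1%:R :> R by rewrite -[k in k%:R]prednK ?(ltnW k_gt1) // -natr1 addrK.
have zk : z ^+ k.-1 = (k%:R * (1 - a))^-1.
  by rewrite -powR_mulrn ?powR_ge0 // -powRrM km1 mulVf ?powRr1 ?ltW // pnatr_eq0 -lt0n.
have z0 : 0 <= z by exact: powR_ge0.
split => //; last by rewrite zk [(1 - a) * _]mulrC mulfV // gt_eqF // (lt_trans ltr01).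
by rewrite -(expr_le1 k1 z0) zk invf_le1 ?(lt_trans ltr01) // ltW.
Qed.

Lemma profile_argmax_ge0 : 0 <= profile_argmax.
Proof.
have [large|small] := boolP (1 - k%:R^-1 <= a); last by case: (profile_argmax_small small).
by rewrite /profile_argmax large.
Qed.

Lemma profile_argmax_le1 : profile_argmax <= 1.
Proof.
have [large|small] := boolP (1 - k%:R^-1 <= a); last by case: (profile_argmax_small small).
by rewrite /profile_argmax large.
Qed.

Lemma profile_le_argmax y : 0 <= y <= 1 -> profile y <= profile profile_argmax.
Proof.
case/andP=> y0 y1; apply: le_trans (profile_le_tangent y0 profile_argmax_ge0) _.
have [large|small] := boolP (1 - k%:R^-1 <= a).
  rewrite /profile_argmax large expr1n mulr1 gerDl mulr_le0_ge0 ?subr_le0 //.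
  by rewrite subr_ge0 -ler_pdivlMr // mul1r; lra.
by case: (profile_argmax_small small) => _ _ ->; rewrite subrr mulr0 addr0.
Qed.

Lemma profile_argmaxE : profile profile_argmax = pi_formula k a.
Proof.
rewrite /pi_formula; have [large|small] := boolP (1 - k%:R^-1 <= a).
  by rewrite /profile_argmax large /profile expr1n mulr1; lra.
case: (profile_argmax_small small) => _ _; rewrite /profile.
have -> : profile_argmax ^+ k = profile_argmax * profile_argmax ^+ k.-1.
  by rewrite -exprS prednK // ltnW.
rewrite /profile_argmax (negPf small); set z := _ `^ _ => slope.
have -> : (1 - a) * (z * z ^+ k.-1) = z * ((1 - a) * k%:R * z ^+ k.-1) / k%:R.
  by field; rewrite gt_eqF.
by rewrite slope mulr1 mulrBr mulr1 addrA.
Qed.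

Lemma profile_le_pi_formula y : 0 <= y <= 1 -> profile y <= pi_formula k a.
Proof. by rewrite -profile_argmaxE; exact: profile_le_argmax. Qed.

Lemma pi_formula_ge1 : 1 <= pi_formula k a.
Proof.
have := @profile_le_pi_formula 0; rewrite lexx ler01 /profile expr0n gtn_eqF ?(ltnW k_gt1) //.
by rewrite mulr0 subr0 addr0; apply.
Qed.

Lemma profile_le_add y z : 0 <= y <= z -> profile z <= profile y + (z - y).
Proof.
case/andP=> y0 yz; have a1 : 0 <= 1 - a by rewrite subr_ge0.
have := ler_wpM2l a1 (lerXn2r k y0 (le_trans y0 yz) yz); rewrite /profile; lra.
Qed.

End Profile.

Section Hypergraph.
Variables (R : realType) (k : nat) (V : finType) (E : {set {set V}}).
Hypotheses (k_gt1 : (1 < k)%N)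
  (sizesE : forall m : nat, in_sizes E m <-> (m = 1%N \/ m = k))
  (singletonsE : forall F : {set V}, (F \in E /\ #|F| = 1%N) <-> exists v : V, F = [set v]).

Local Notation Hk := (kedges E k).

Let k_neq1 : (k == 1%N) = false. Proof. exact: gtn_eqF. Qed.

Lemma edge_card F : F \in E -> #|F| = 1%N \/ #|F| = k.
Proof. by move=> FE; apply/sizesE/existsP; exists F; rewrite FE eqxx. Qed.

Lemma set1_edge v : [set v] \in E.
Proof. by have [] := (singletonsE [set v]).2 (ex_intro _ v erefl). Qed.

Lemma kedge_exists : exists F, F \in Hk.
Proof.
have /existsP[F /andP[FE Fk]] := (sizesE k).2 (or_intror erefl).
by exists F; rewrite inE FE.
Qed.

Lemma admissible_kedgesP (T : finType) (G : {set {set T}}) :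
  admissible Hk G <-> {in G, forall F : {set T}, #|F| = k} /\ ~~ hg_sub Hk G.
Proof.
have sizesHk m : in_sizes Hk m = (m == k).
  apply/existsP/eqP => [[F /andP[]]|->]; first by rewrite inE => /andP[_ /eqP <-] /eqP.
  by have [F FH] := kedge_exists; exists F; rewrite FH; rewrite inE in FH; case/andP: FH.
rewrite /admissible /sizes_sub; split => [/andP[/forallP Gk ->]|[Gk ->]].
  by split => // F FG; have := implyP (Gk F) FG; rewrite sizesHk => /eqP.
by rewrite andbT; apply/forallP => F; apply/implyP => /Gk; rewrite sizesHk => ->.
Qed.

Lemma admissible_kedges0 (T : finType) : admissible Hk (finset.set0 : {set {set T}}).
Proof.
apply/admissible_kedgesP; split=> [F|]; first by rewrite inE.
have [F FH] := kedge_exists.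
by apply/hg_subP => -[f _ /(_ F FH)]; rewrite inE.
Qed.

Lemma card_le_pin_kedges n (G : {set {set 'I_n}}) :
  admissible Hk G -> #|G|%:R <= pin R Hk n * 'C(n, k)%:R.
Proof.
move=> GH; have [Gk _] := (admissible_kedgesP G).1 GH.
have := hn_le_pin R GH; rewrite (hn_uniform _ Gk).
have := card_uniform_le_bin Gk; rewrite card_ord.
case: (posnP 'C(n, k)) => [->|C0]; first by rewrite leqn0 => /eqP -> _; rewrite mulr0.
by rewrite ler_pdivrMr // ltr0n.
Qed.

Lemma pin_kedges_le1 n : pin R Hk n <= 1.
Proof.
apply: pin_le => // G GH; have [Gk _] := (admissible_kedgesP G).1 GH.
rewrite (hn_uniform _ Gk); have := card_uniform_le_bin Gk; rewrite card_ord.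
case: (posnP 'C(n, k)) => [->|C0]; first by rewrite leqn0 => /eqP ->; rewrite mul0r.
by rewrite ler_pdivrMr ?ltr0n // mul1r ler_nat.
Qed.

Lemma pin_kedges_attained n : exists2 G : {set {set 'I_n}},
  admissible Hk G & #|G|%:R = pin R Hk n * 'C(n, k)%:R.
Proof.
have [G GH <-] := pin_attained R (admissible_kedges0 'I_n).
exists G => //; have [Gk _] := (admissible_kedgesP G).1 GH.
rewrite (hn_uniform _ Gk); have := card_uniform_le_bin Gk; rewrite card_ord.
case: (posnP 'C(n, k)) => [->|C0]; first by rewrite leqn0 => /eqP ->; rewrite !mulr0.
by rewrite divfK // pnatr_eq0 -lt0n.
Qed.

Lemma card_avoiding_le_pin_kedges n (G : {set {set 'I_n.+1}}) (i : 'I_n.+1) :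
  admissible Hk G -> #|[set F in G | i \notin F]|%:R <= pin R Hk n * 'C(n, k)%:R.
Proof.
case/admissible_kedgesP=> Gk GH.
have liftT : lift i @: [set: 'I_n] = [set~ i].
  apply/setP => j; rewrite !inE; apply/imsetP/idP => [[l _ ->]|].
    by rewrite eq_sym neq_lift.
  by rewrite eq_sym => /unlift_some[l -> _]; exists l.
have -> : #|[set F in G | i \notin F]| = #|[set F : {set 'I_n} | lift i @: F \in G]|.
  rewrite card_preimset_imset ?liftT; last exact: lift_inj.
  apply: eq_card => F; rewrite !inE; congr (_ && _); apply/idP/idP => [iF|].
    by apply/fintype.subsetP => j jF; rewrite !inE; apply: contraNneq iF => <-.
  by move/fintype.subsetP=> Fi; apply/negP => /Fi; rewrite !inE eqxx.
apply: card_le_pin_kedges; apply/admissible_kedgesP; split.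
  by move=> F; rewrite inE => /Gk; rewrite card_imset //; exact: lift_inj.
apply: contra GH; apply: hg_sub_imset (@lift_inj _ i) _ => F; by rewrite inE.
Qed.

Lemma pin_kedges_nonincreasing n : (k <= n)%N -> pin R Hk n.+1 <= pin R Hk n.
Proof.
move=> kn; apply: pin_le => [|G GH]; first exact: pin_ge0.
have [Gk _] := (admissible_kedgesP G).1 GH.
have nk0 : (0 : R) < (n.+1 - k)%N%:R by rewrite ltr0n subn_gt0 ltnS.
have C0 : (0 : R) < 'C(n.+1, k)%:R by rewrite ltr0n bin_gt0 leqW.
(* Each k-edge of G avoids n.+1 - k of the n.+1 vertices. *)
have sum_le : (#|G| * (n.+1 - k))%N%:R <= n.+1%:R * (pin R Hk n * 'C(n, k)%:R).
  rewrite -[X in (X - k)%N](card_ord n.+1) -(sum_card_notin Gk) natr_sum.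
  apply: le_trans (ler_sum _ (fun i _ => card_avoiding_le_pin_kedges i GH)) _.
  by rewrite sumr_const card_ord mulr_natl.
rewrite (hn_uniform _ Gk) ler_pdivrMr // -(ler_pM2r nk0) -natrM.
by apply: le_trans sum_le _; rewrite mulrCA -natrM mul_bin_down natrM mulrA mulrAC.
Qed.

Lemma pin_kedges_le_of_le m n : (k <= m <= n)%N -> pin R Hk n <= pin R Hk m.
Proof.
case/andP=> km /subnKC <-; elim: (n - m)%N => [|d IH]; first by rewrite addn0.
by apply: le_trans IH; rewrite addnS pin_kedges_nonincreasing // (leq_trans km) ?leq_addr.
Qed.

Lemma pin_kedges_cvg : cvgn (pin R Hk).
Proof.
apply: (@near_nonincreasing_is_cvgn _ _ 0); last by near=> n; exact: pin_ge0.
by exists k => // m km n mn; apply: pin_kedges_le_of_le; rewrite km.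
Unshelve. all: by end_near. Qed.

Lemma lim_pin_kedges_le n : (k <= n)%N -> limn (pin R Hk) <= pin R Hk n.
Proof.
move=> kn; apply: limr_le pin_kedges_cvg _; near=> m.
by apply: pin_kedges_le_of_le; rewrite kn; near: m; exact: nbhs_infty_ge.
Unshelve. all: by end_near. Qed.

Lemma lim_pin_kedges_ge0 : 0 <= limn (pin R Hk).
Proof.
by apply: limr_ge pin_kedges_cvg _; near=> n; exact: pin_ge0.
Unshelve. all: by end_near. Qed.

Lemma lim_pin_kedges_le1 : limn (pin R Hk) <= 1.
Proof. exact: le_trans (lim_pin_kedges_le (leqnn k)) (pin_kedges_le1 k). Qed.

Lemma admissibleP (T : finType) (G : {set {set T}}) :
  admissible E G <-> {in G, forall F : {set T}, #|F| = 1%N \/ #|F| = k} /\ ~~ hg_sub E G.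
Proof.
rewrite /admissible /sizes_sub; split => [/andP[/forallP Gsz ->]|[Gsz ->]].
  by split => // F FG; apply/sizesE; exact: implyP (Gsz F) FG.
by rewrite andbT; apply/forallP => F; apply/implyP => /Gsz/sizesE.
Qed.

Lemma hg_sub_of_kedges (W T : finType) (e : W -> T) (G' : {set {set W}})
    (G : {set {set T}}) :
  injective e -> (forall w, [set e w] \in G) -> (forall F, F \in G' -> e @: F \in G) ->
  hg_sub Hk G' -> hg_sub E G.
Proof.
move=> ei e1 eG /hg_subP[f fi fH]; apply/hg_subP; exists (e \o f); first exact: inj_comp.
move=> F FE; rewrite imset_comp; have [F1|Fk] := edge_card FE.
  by have [v ->] := (singletonsE F).1 (conj FE F1); rewrite !imset_set1.
by apply/eG/fH; rewrite inE FE Fk eqxx.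
Qed.

Lemma card_kedges_sub_singleton_vertices n (G : {set {set 'I_n}}) : admissible E G ->
  #|kedges G k :&: [set F : {set 'I_n} | F \subset singleton_vertices G]|%:R
    <= pin R Hk #|singleton_vertices G| * 'C(#|singleton_vertices G|, k)%:R.
Proof.
case/admissibleP=> _ GE; set S := singleton_vertices G; set e := @enum_val _ (mem S).
have eS : e @: [set: 'I_#|S|] = S.
  apply/setP => x; apply/imsetP/idP => [[i _ ->]|xS]; first exact: enum_valP.
  by exists (enum_rank_in xS x); rewrite ?inE // /e enum_rankK_in.
have -> : #|kedges G k :&: [set F : {set 'I_n} | F \subset S]| =
          #|[set F : {set 'I_#|S|} | e @: F \in kedges G k]|.
  rewrite card_preimset_imset ?eS; last exact: enum_val_inj.
  by apply: eq_card => F; rewrite !inE.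
apply: card_le_pin_kedges; apply/admissible_kedgesP; split.
  by move=> F; rewrite !inE card_imset => [/andP[_ /eqP]|]; last exact: enum_val_inj.
apply: contra GE; apply: hg_sub_of_kedges enum_val_inj _ _ => [w|F].
  by have := enum_valP w; rewrite inE.
by rewrite !inE => /andP[].
Qed.

(* The value of h_n on the construction [blowup] below with s singleton vertices
   and an extremal H^k-free graph on them. *)
Definition blowup_density n s : R :=
  1 + s%:R / n%:R - 'C(s, k)%:R / 'C(n, k)%:R * (1 - pin R Hk s).

Lemma hn_le_blowup_density n (G : {set {set 'I_n}}) : (k <= n)%N -> admissible E G ->
  exists2 s, (s <= n)%N & hn R G <= blowup_density n s.
Proof.
move=> kn GE; have inside := card_kedges_sub_singleton_vertices GE.
case/admissibleP: GE => Gsz _; set S := singleton_vertices G in inside *.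
exists #|S|; first by rewrite -[X in (_ <= X)%N](card_ord n) max_card.
set Sk := [set F : {set 'I_n} | F \subset S] in inside.
have outside : (#|kedges G k :\: Sk| + 'C(#|S|, k) <= 'C(n, k))%N.
  rewrite -[X in (_ <= 'C(X, k))%N](card_ord n) -(card_ksets_not_subset S k) leq_add2r.
  apply: subset_leq_card.
  by apply/fintype.subsetP => F; rewrite !inE => /andP[FS /andP[_ ->]].
rewrite (hn_split _ (negbT k_neq1) Gsz) -(cardsID Sk) /blowup_density.
move: inside outside; set A := #|_ :&: _|; set B := #|_ :\: _|.
set c := 'C(#|S|, k); set p := pin R Hk #|S| => inside outside.
have {}outside : B%:R + c%:R <= 'C(n, k)%:R :> R by rewrite -natrD ler_nat.
have C0 : (0 : R) < 'C(n, k)%:R by rewrite ltr0n bin_gt0.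
suff : (A + B)%:R / 'C(n, k)%:R <= 1 - c%:R / 'C(n, k)%:R * (1 - p) by rewrite -/S; lra.
rewrite ler_pdivrMr // mulrBl mul1r mulrAC divfK ?gt_eqF // natrD; lra.
Qed.

Section Blowup.
Variables (W T : finType) (e : W -> T) (Gs : {set {set W}}).
Hypotheses (e_inj : injective e) (Gs_uniform : {in Gs, forall F : {set W}, #|F| = k}).

Definition blowup : {set {set T}} :=
  [set [set e w] | w : W] :|:
  [set F : {set T} | (#|F| == k) && ~~ (F \subset e @: [set: W])] :|:
  [set e @: F | F : {set W} in Gs].

Lemma blowup_edge_card : {in blowup, forall F : {set T}, #|F| = 1%N \/ #|F| = k}.
Proof.
move=> F; rewrite !inE.
case/orP=> [/orP[/imsetP[w _ ->]|/andP[/eqP Fk _]]|/imsetP[F' /Gs_uniform]].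
- by left; rewrite cards1.
- by right.
- by move=> F'k ->; right; rewrite card_imset.
Qed.

Lemma singleton_vertices_blowup : singleton_vertices blowup = e @: [set: W].
Proof.
apply/setP => x; rewrite inE; apply/idP/imsetP => [|[w _ ->]]; last first.
  by rewrite !inE; apply/orP; left; apply/orP; left; apply/imsetP; exists w.
rewrite !inE cards1 eq_sym k_neq1 orbF => /orP[/imsetP[w _ /set1_inj ->]|].
  by exists w.
case/imsetP=> F' /Gs_uniform F'k /(congr1 (fun X : {set T} => #|X|)) /eqP.
by rewrite cards1 card_imset // F'k eq_sym k_neq1.
Qed.

Lemma card_kedges_blowup :
  (#|kedges blowup k| + 'C(#|W|, k) = 'C(#|T|, k) + #|Gs|)%N.
Proof.
set Out := [set F : {set T} | (#|F| == k) && ~~ (F \subset e @: [set: W])].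
set Img := [set e @: F | F : {set W} in Gs].
have ImgS F : F \in Img -> F \subset e @: [set: W].
  by case/imsetP=> F' _ ->; exact/imsetS/finset.subsetT.
have -> : kedges blowup k = Out :|: Img.
  apply/setP => F; rewrite !inE -!/Out -!/Img !andb_orl andbAC andbb.
  have -> : (F \in [set [set e w] | w : W]) && (#|F| == k) = false.
    apply/andP => -[/imsetP[w _ ->]]; by rewrite cards1 eq_sym k_neq1.
  congr (_ || _); apply/andb_idr; case/imsetP=> F' /Gs_uniform F'k ->.
  by rewrite card_imset ?F'k.
rewrite cardsU; have -> : Out :&: Img = finset.set0.
  apply/setP => F; rewrite !inE; apply/andP => -[/andP[_ /negP FnS] /ImgS].
  by move/FnS.
rewrite cards0 subn0 addnAC -(card_ksets_not_subset (e @: [set: W])).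
by rewrite card_imset ?cardsT ?card_imset //; exact: imset_inj.
Qed.

Lemma blowup_admissible : admissible Hk Gs -> admissible E blowup.
Proof.
case/admissible_kedgesP=> _ GsH; apply/admissibleP; split; first exact: blowup_edge_card.
apply: contra GsH => /hg_subP[f fi fE].
have fe v : f v \in e @: [set: W].
  by rewrite -singleton_vertices_blowup inE -imset_set1 fE ?set1_edge.
apply: (hg_sub_factor e_inj fi) => [v|F].
  by case/imsetP: (fe v) => w _ ->; exact: codom_f.
rewrite inE => /andP[FE /eqP Fk]; have := fE F FE.
rewrite !inE card_imset // Fk eqxx /=; case/orP => [/orP[/imsetP[w _ fF]|]|//].
  by move: k_gt1; rewrite -Fk -(card_imset F fi) fF cards1.
by case/negP; apply/fintype.subsetP => _ /imsetP[v _ ->]; exact: fe.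
Qed.

End Blowup.

Lemma blowup_density_le_pin n s : (k <= n)%N -> (s <= n)%N ->
  blowup_density n s <= pin R E n.
Proof.
move=> kn sn; have [Gs GsH GsE] := pin_kedges_attained s.
have [Gsk _] := (admissible_kedgesP Gs).1 GsH.
have ei : injective (widen_ord sn) by move=> i j /(congr1 val) /= /val_inj.
apply: le_trans (hn_le_pin R (blowup_admissible ei Gsk GsH)).
rewrite (hn_split _ (negbT k_neq1) (blowup_edge_card ei Gsk)).
rewrite singleton_vertices_blowup // card_imset // cardsT card_ord.
have := card_kedges_blowup ei Gsk; rewrite !card_ord => /(congr1 (fun m => m%:R : R)).
rewrite !natrD GsE => cardE.
have C0 : 'C(n, k)%:R != 0 :> R by rewrite pnatr_eq0 -lt0n bin_gt0.
rewrite /blowup_density (_ : #|_|%:R = 'C(n, k)%:R - 'C(s, k)%:R * (1 - pin R Hk s)).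
  by rewrite mulrBl divff // mulrAC; lra.
by rewrite mulrBr mulr1; lra.
Qed.

Local Notation a := (limn (pin R Hk)).
Local Open Scope classical_set_scope.
Local Open Scope ring_scope.

Lemma near_infty_div_le (c e : R) : 0 < e ->
  \forall n \near \oo, c / n%:R <= e.
Proof.
move=> e0; near=> n.
have n0 : (0 : R) < n%:R by rewrite ltr0n; near: n; exact: nbhs_infty_gt.
rewrite ler_pdivrMr // mulrC -ler_pdivrMr //; near: n; exact: nbhs_infty_ger.
Unshelve. all: by end_near. Qed.


Lemma blowup_density_le_1 n s : blowup_density n s <= 1 + s%:R / n%:R.
Proof.
rewrite /blowup_density gerBl mulr_ge0 ?divr_ge0 //.
by rewrite subr_ge0 pin_kedges_le1.
Qed.

Lemma blowup_density_le_pi_formula n s : (k <= s <= n)%N ->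
  blowup_density n s <= pi_formula k a + k%:R / n%:R + (pin R Hk s - a).
Proof.
case/andP=> ks sn; have kn := leq_trans ks sn.
have n0 : (0 : R) < n%:R by rewrite ltr0n (leq_trans _ kn) // ltnW.
have y01 : 0 <= ((s - k)%N%:R / n%:R : R) <= 1.
  by rewrite divr_ge0 //= ler_pdivrMr // mul1r ler_nat (leq_trans (leq_subr _ _)).
have := profile_le_pi_formula k_gt1 lim_pin_kedges_ge0 lim_pin_kedges_le1 y01.
have Yc : ((s - k)%N%:R / n%:R) ^+ k <= 'C(s, k)%:R / 'C(n, k)%:R :> R.
  by apply: expn_le_bin_ratio; rewrite ks.
have c1 : 'C(s, k)%:R / 'C(n, k)%:R <= 1 :> R.
  by rewrite ler_pdivrMr ?ltr0n ?bin_gt0 // mul1r ler_nat leq_bin2l.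
have sE : s%:R / n%:R = (s - k)%N%:R / n%:R + k%:R / n%:R :> R.
  by rewrite -mulrDl -natrD subnK.
rewrite /profile /blowup_density sE.
move: Yc c1; set c := 'C(s, k)%:R / _; set y := _ / n%:R; set p := pin R Hk s.
move=> Yc c1 yL.
have ca : 0 <= (c - y ^+ k) * (1 - a).
  by rewrite mulr_ge0 ?subr_ge0 ?lim_pin_kedges_le1.
have cp : 0 <= (1 - c) * (p - a).
  by rewrite mulr_ge0 ?subr_ge0 ?lim_pin_kedges_le.
lra.
Qed.

Lemma profile_le_blowup_density n s : (k <= n)%N -> (s <= n)%N ->
  profile k a (s%:R / n%:R) <= blowup_density n s.
Proof.
move=> kn sn; rewrite /profile /blowup_density lerD2l lerN2.
have a1 : 0 <= 1 - a by rewrite subr_ge0 lim_pin_kedges_le1.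
have [sk|ks] := ltnP s k.
  by rewrite bin_small // mul0r mul0r mulr_ge0 // exprn_ge0 // divr_ge0.
apply: (@le_trans _ _ ('C(s, k)%:R / 'C(n, k)%:R * (1 - a))).
  by rewrite ler_wpM2l ?divr_ge0 // lerB // lim_pin_kedges_le.
by rewrite mulrC ler_wpM2l // bin_ratio_le_expn.
Qed.

Lemma pin_le_eventually e : 0 < e ->
  \forall n \near \oo, pin R E n <= pi_formula k a + e.
Proof.
move=> e0; have e20 : 0 < e / 2 by rewrite divr_gt0.
have [N _ pN] := (cvgrPdist_le _ _).1 pin_kedges_cvg _ e20.
have L1 := pi_formula_ge1 k_gt1 lim_pin_kedges_ge0 lim_pin_kedges_le1.
near=> n.
have kn : (k <= n)%N by near: n; exact: nbhs_infty_ge.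
have Nn : (N + k)%:R / n%:R <= e / 2 by near: n; exact: near_infty_div_le.
have n0 : (0 : R) < n%:R by rewrite ltr0n (leq_trans _ kn) // ltnW.
apply: pin_le => [|G /(hn_le_blowup_density kn)[s sn hG]]; first lra.
apply: le_trans hG _; have [small|large] := ltnP s (N + k).
  have : s%:R / n%:R <= (N + k)%:R / n%:R :> R by rewrite ler_pM2r ?invr_gt0 // ler_nat ltnW.
  by have := blowup_density_le_1 n s; lra.
have ks : (k <= s <= n)%N by rewrite sn (leq_trans (leq_addl N k)).
have : k%:R / n%:R <= (N + k)%:R / n%:R :> R by rewrite ler_pM2r ?invr_gt0 // ler_nat leq_addl.
have /ler_normlP[pa _] := pN s (leq_trans (leq_addr k N) large).
by have := blowup_density_le_pi_formula ks; lra.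
Unshelve. all: by end_near. Qed.

Lemma pin_ge_eventually e : 0 < e ->
  \forall n \near \oo, pi_formula k a - e <= pin R E n.
Proof.
move=> e0; have a0 := lim_pin_kedges_ge0; have a1 := lim_pin_kedges_le1.
set y := profile_argmax k a; have y0 : 0 <= y := profile_argmax_ge0 k_gt1 a0 a1.
have y1 : y <= 1 := profile_argmax_le1 k_gt1 a0 a1.
near=> n.
have kn : (k <= n)%N by near: n; exact: nbhs_infty_ge.
have ne : 1 / n%:R <= e by near: n; exact: near_infty_div_le.
have n0 : (0 : R) < n%:R by rewrite ltr0n (leq_trans _ kn) // ltnW.
set s := Num.truncn (y * n%:R).
have /andP[sy ys] := truncn_itv (mulr_ge0 y0 (ler0n R n)); rewrite -/s in sy ys.
have sn : (s <= n)%N.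
  by rewrite -(ler_nat R); apply: le_trans sy _; rewrite ler_piMl // ler0n.
apply: le_trans (blowup_density_le_pin kn sn).
apply: le_trans (profile_le_blowup_density kn sn).
have sny : 0 <= (s%:R / n%:R : R) <= y by rewrite divr_ge0 //= ler_pdivrMr.
have := profile_le_add k a1 sny; rewrite profile_argmaxE //.
have : y - s%:R / n%:R <= 1 / n%:R.
  by rewrite lerBlDr -mulrDl addrC natr1 ler_pdivlMr // ltW.
lra.
Unshelve. all: by end_near. Qed.

End Hypergraph.

Local Open Scope classical_set_scope.
Local Open Scope ring_scope.

Theorem mainTheorem6 (R : realType) (k : nat) (V : finType) (E : {set {set V}}) :
  (2 <= k)%N ->
  (forall m : nat, in_sizes E m <-> (m = 1%N \/ m = k)) ->
  (forall F : {set V}, (F \in E /\ #|F| = 1%N) <-> exists v : V, F = [set v]%SET) ->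
  exists a : R,
    (pin R (kedges E k) n @[n --> \oo] --> a) /\
    (pin R E n @[n --> \oo] --> pi_formula k a).
Proof.
move=> k_gt1 sizesE singletonsE.
exists (limn (pin R (kedges E k))); split; first exact: pin_kedges_cvg.
apply/cvgrPdist_le => e e0; near=> n; rewrite ler_norml; apply/andP; split.
- by near: n; apply: filterS _ (pin_le_eventually k_gt1 sizesE singletonsE e0) => n ?; lra.
- by near: n; apply: filterS _ (pin_ge_eventually k_gt1 sizesE singletonsE e0) => n ?; lra.
Unshelve. all: by end_near. Qed.
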